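(* Let $z\in\mathbb R^d$ satisfy $\|z\|_2=1$ and $\|z\|_\infty\le\mu/\sqrt d$, and let $M=zz^\top$. There are a polynomial $P$ and absolute constants $c_0,C>0$ such that if $0<\epsilon\le c_0$ and $p\ge P(\mu,\log d)/(d\epsilon^2)$ (with $p\le1$), then with probability $1-o(1)$ as $d\to\infty$ over $\Omega$, every local minimum $x$ of $f(x)=\frac12\|P_\Omega(M-xx^\top)\|_F^2$ that lies in $\mathcal B=\{x\in\mathbb R^d:\|x\|_\infty<2\mu/\sqrt d\}$ satisfies $\min(\|x-z\|_2,\|x+z\|_2)\le C\sqrt\epsilon$.
   Context: The random set $\Omega\subseteq[d]\times[d]$ is generated as follows: independently for each unordered pair $\{i,j\}$ (including $i=j$), with probability $p$ both $(i,j)$ and $(j,i)$ are placed in $\Omega$, otherwise neither. $P_\Omega(A)$ is the matrix agreeing with $A$ on entries in $\Omega$ and zero elsewhere; $\|\cdot\|_F$ is the Frobenius norm. *)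

From HB Require Import structures.
From mathcomp Require Import all_boot all_order all_algebra.
From mathcomp Require Import all_classical all_reals all_analysis.
Set Implicit Arguments. Unset Strict Implicit. Unset Printing Implicit Defensive.
Import Order.TTheory GRing.Theory Num.Theory.
Local Open Scope ring_scope.

Section Defs.
Variables (R : realType) (d : nat).

(* index pairs {i,j} encoded by (i,j) with i <= j (diagonal included) *)
Definition upper : {set 'I_d * 'I_d} := [set ij : 'I_d * 'I_d | (nat_of_ord ij.1 <= nat_of_ord ij.2)%N].

(* Omega generated from the set S of selected unordered pairs: both (i,j) and (j,i) *)
Definition omega_of (S : {set 'I_d * 'I_d}) : {set 'I_d * 'I_d} :=
  [set ij : 'I_d * 'I_d | ((ij.1, ij.2) \in S) || ((ij.2, ij.1) \in S)].

(* probability of selecting exactly S, each unordered pair independently w.p. p *)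
Definition weight (p : R) (S : {set 'I_d * 'I_d}) : R :=
  \prod_(ij in upper) (if ij \in S then p else 1 - p).

(* probability that the random Omega satisfies the event E *)
Definition prob (p : R) (E : {set 'I_d * 'I_d} -> Prop) : R :=
  \sum_(S : {set 'I_d * 'I_d} | S \subset upper)
     weight p S * (if `[< E S >] then 1 else 0).

Definition P_Omega (Om : {set 'I_d * 'I_d}) (A : 'M[R]_d) : 'M[R]_d :=
  \matrix_(i, j) (if (i, j) \in Om then A i j else 0).

Definition normF (A : 'M[R]_d) : R := Num.sqrt (\sum_i \sum_j (A i j) ^+ 2).

Definition norm2 (x : 'cV[R]_d) : R := Num.sqrt (\sum_i (x i 0) ^+ 2).

Definition normInf (x : 'cV[R]_d) : R := \big[Num.max/0]_i `|x i 0|.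

Definition fobj (Om : {set 'I_d * 'I_d}) (M : 'M[R]_d) (x : 'cV[R]_d) : R :=
  2^-1 * (normF (P_Omega Om (M - x *m x^T))) ^+ 2.

Definition local_min (g : 'cV[R]_d -> R) (x : 'cV[R]_d) : Prop :=
  exists r : R, 0 < r /\ forall y, norm2 (y - x) < r -> g x <= g y.

End Defs.

Definition peval2 (R : realType) (P : {poly {poly R}}) (a b : R) : R :=
  (P.[b%:P]).[a].

(* Centering the mask
     at its mean p, the cut form X(s,t) = sum_ij (1[ij in Omega] - p) s_i t_j
     at sign vectors s, t is a sum of independent bounded variables.  A
     Chernoff bound with the Bernoulli moment generating function and a
     union bound over the 4^d sign pairs give |X(s,t)| <= 16 d sqrt(pd) for
     all s, t except with probability 2 4^d e^(-8d).  Choosing signs of row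
     and column sums (BilinearDeviation), the same bound controls every
     bilinear deviation sum_ij (1[ij in Omega] - p) u_i w_j, |u|, |w| <= m.
   * Deterministic recovery (QuarticMinimum to GoodEventRecovery).  At a
     local minimum x, the quartic t |-> f(x + t v) is minimal at t = 0, so
     its linear coefficient vanishes (v = x, v = z) and its quadratic one is
     nonnegative (v = z).  Replacing each masked sum by p times the full sum
     up to the concentration error gives inequalities on a = |x|^2 and
     b = <x,z> forcing a + 1 - 2|b| <= eps, i.e. min |x -+ z|^2 <= eps. *)

From HB Require Import structures.
From mathcomp Require Import all_boot all_order all_algebra.
From mathcomp Require Import all_classical all_reals all_analysis.
From mathcomp Require Import ring lra.
Import Order.TTheory GRing.Theory Num.Theory.
Set Implicit Arguments. Unset Strict Implicit. Unset Printing Implicit Defensive.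
Local Open Scope ring_scope.

(* Summing a product of independent per-element factors over all subsets of
   U factorizes: this is the independence of the Bernoulli selections. *)
Lemma sum_subsets_prod (T : finType) (R : comNzRingType) (U : {set T})
    (F : T -> bool -> R) :
  \sum_(S : {set T} | S \subset U) \prod_(e in U) F e (e \in S) =
  \prod_(e in U) (F e true + F e false).
Proof.
pose G e b := if e \in U then F e b else (if b then 0 else 1 : R).
have -> : \prod_(e in U) (F e true + F e false) = \prod_e \sum_(b : bool) G e b.
  rewrite big_mkcond /=; apply: eq_bigr => e _.
  by rewrite big_bool /G; case: (e \in U) => //=; rewrite add0r.
rewrite bigA_distr_bigA /=.
rewrite (reindex (fun S : {set T} => [ffun e => e \in S])) /=; last first.
  exists (fun f : {ffun T -> bool} => [set e | f e]) => [S _|f _].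
    by apply/setP => e; rewrite inE ffunE.
  by apply/ffunP => e; rewrite ffunE inE.
rewrite [RHS](bigID (fun S : {set T} => S \subset U)) /=.
rewrite [X in _ = _ + X]big1 ?addr0; last first.
  move=> S /subsetPn [e eS eU].
  by rewrite (bigD1 e) //= ffunE /G (negbTE eU) eS mul0r.
apply: eq_bigr => S SU.
rewrite [LHS]big_mkcond /=; apply: eq_bigr => e _.
rewrite ffunE /G; case eU: (e \in U) => //.
by case eS: (e \in S) => //; move/fintype.subsetP: SU => /(_ e eS); rewrite eU.
Qed.

Section MomentGenerating.
Variable R : realType.

Lemma expR_sub_linear_le (y : R) : `|y| <= 1/2 -> expR y - 1 - y <= 2 * y ^+ 2.
Proof.
rewrite ler_norml => /andP [yl yr].
have hpos : 0 < 1 - y by lra.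
have expN_ge : 1 - y <= expR (- y) by have := expR_ge1Dx (- y); rewrite addrC.
have exp_le_inv : expR y <= (1 - y)^-1.
  by rewrite -[expR y]invrK -expRN lef_pV2 // posrE ?expR_gt0.
have inv_le : (1 - y)^-1 <= 1 + y + 2 * y ^+ 2.
  have hq : 1 <= (1 - y) * (1 + y + 2 * y ^+ 2) by nra.
  by rewrite -div1r ler_pdivrMr // mulrC.
lra.
Qed.

Lemma bernoulli_mgf_le (p y : R) : 0 <= p -> p <= 1 -> `|y| <= 1/2 ->
  p * expR (y * (1 - p)) + (1 - p) * expR (- (y * p)) <= expR (2 * p * y ^+ 2).
Proof.
move=> p0 p1 hy.
have -> : p * expR (y * (1 - p)) + (1 - p) * expR (- (y * p)) =
          expR (- (y * p)) * (1 + p * (expR y - 1)).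
  by rewrite mulrBr mulr1 expRD; ring.
apply: (le_trans (y := expR (- (y * p)) * expR (p * (expR y - 1)))).
  by rewrite ler_wpM2l ?expR_ge0 // expR_ge1Dx.
rewrite -expRD ler_expR.
have := expR_sub_linear_le hy; nra.
Qed.

Lemma centered_sum_mgf_le (T : finType) (U : {set T}) (c : T -> R) (th p : R) :
  0 <= p -> p <= 1 -> (forall e, `|th * c e| <= 1/2) ->
  \sum_(S : {set T} | S \subset U)
     (\prod_(e in U) (if e \in S then p else 1 - p)) *
     expR (th * \sum_(e in U) c e * ((e \in S)%:R - p))
  <= expR (2 * p * \sum_(e in U) (th * c e) ^+ 2).
Proof.
move=> p0 p1 hc.
under eq_bigr => S _.
  rewrite mulr_sumr expR_sum -big_split /=.
  under eq_bigr => e _ do rewrite mulrA.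
over.
rewrite (sum_subsets_prod U
  (fun e b => (if b then p else 1 - p) * expR (th * c e * (b%:R - p)))).
rewrite mulr_sumr expR_sum; apply: ler_prod => e _.
rewrite addr_ge0 ?mulr_ge0 ?expR_ge0 ?subr_ge0 //=.
by have := bernoulli_mgf_le p0 p1 (hc e); rewrite sub0r mulrN.
Qed.

End MomentGenerating.

Section CutForm.
Variables (R : realType) (d : nat).
Local Notation pairs := {set 'I_d * 'I_d}.
Local Notation signs := {ffun 'I_d -> bool}.

Lemma sum_pairs_upper (G : 'I_d -> 'I_d -> R) :
  \sum_i \sum_j G i j =
  \sum_(e in upper d) (G e.1 e.2 + (e.1 != e.2)%:R * G e.2 e.1).
Proof.
rewrite pair_bigA /= (bigID (fun e : 'I_d * 'I_d => (e.1 <= e.2)%N)) /=.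
rewrite big_split /=; congr (_ + _).
  by apply: eq_bigl => e; rewrite /upper inE.
rewrite (reindex (fun e : 'I_d * 'I_d => (e.2, e.1))) /=; last first.
  by exists (fun e : 'I_d * 'I_d => (e.2, e.1)) => [[a b]|[a b]].
rewrite [RHS]big_mkcond [LHS]big_mkcond /=; apply: eq_bigr => e _.
rewrite /upper inE -ltnNge ltn_neqAle.
case: (e.1 <= e.2)%N; rewrite ?andbF ?andbT //=.
by case: (nat_of_ord e.1 != e.2) => /=; rewrite ?mul1r ?mul0r.
Qed.

(* The sign vectors are encoded as boolean functions. *)
Definition sgn (b : bool) : R := if b then 1 else -1.

Definition omega_ind (S : pairs) (i j : 'I_d) : R := ((i, j) \in omega_of S)%:R.

Definition cut_form (p : R) (S : pairs) (s t : signs) : R :=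
  \sum_i \sum_j (omega_ind S i j - p) * (sgn (s i) * sgn (t j)).

Definition cut_coef (s t : signs) (e : 'I_d * 'I_d) : R :=
  sgn (s e.1) * sgn (t e.2) + (e.1 != e.2)%:R * (sgn (s e.2) * sgn (t e.1)).

Lemma omega_ind_sym (S : pairs) i j : omega_ind S i j = omega_ind S j i.
Proof. by rewrite /omega_ind /omega_of !inE orbC. Qed.

Lemma omega_ind_upper (S : pairs) e : S \subset upper d -> e \in upper d ->
  omega_ind S e.1 e.2 = (e \in S)%:R.
Proof.
move=> SU; case: e => a b; rewrite /upper inE /= => hab.
rewrite /omega_ind /omega_of inE /=.
case hS: ((a, b) \in S) => //=.
case hS2: ((b, a) \in S) => //.
move/fintype.subsetP: SU => /(_ _ hS2); rewrite inE /= => hba.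
have eab : a = b by apply: ord_inj; apply/eqP; rewrite eqn_leq hab hba.
by move: hS hS2; rewrite eab => ->.
Qed.

Lemma cut_form_upper p (S : pairs) s t : S \subset upper d ->
  cut_form p S s t = \sum_(e in upper d) cut_coef s t e * ((e \in S)%:R - p).
Proof.
move=> SU; rewrite /cut_form sum_pairs_upper; apply: eq_bigr => e eU.
by rewrite (omega_ind_sym S e.2 e.1) omega_ind_upper // /cut_coef; ring.
Qed.

Lemma sgn_norm b : `|sgn b| = 1.
Proof. by case: b; rewrite /sgn ?normrN normr1. Qed.

Lemma cut_coef_bound s t e : `|cut_coef s t e| <= 2.
Proof.
rewrite /cut_coef; apply: (le_trans (ler_normD _ _)).
rewrite !normrM !sgn_norm !mulr1.
have : `|((e.1 != e.2)%:R : R)| <= 1.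
  by case: (e.1 != e.2); rewrite ?normr1 ?normr0.
lra.
Qed.

Lemma card_upper_le : (#|upper d| <= d * d)%N.
Proof. by apply: (leq_trans (max_card _)); rewrite card_prod card_ord. Qed.

Lemma weight_ge0 (p : R) (S : pairs) : 0 <= p -> p <= 1 -> 0 <= weight p S.
Proof.
move=> p0 p1; apply: prodr_ge0 => e _.
by case: (e \in S); lra.
Qed.

Lemma weight_sum1 (p : R) :
  \sum_(S : pairs | S \subset upper d) weight p S = 1.
Proof.
rewrite /weight (sum_subsets_prod (upper d) (fun e b => if b then p else 1 - p)).
by apply: big1 => e _; rewrite addrC subrK.
Qed.

(* Exponential tail of one cut form (weights bounded by 2), at the level
   16 d q with q^2 = p d: the Chernoff parameter 1/q gives the
   exponent -16 d + 8 d. *)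
Lemma cut_tail_le (c : 'I_d * 'I_d -> R) (p q : R) :
  (forall e, `|c e| <= 2) -> 0 <= p -> p <= 1 -> 4 <= q -> q ^+ 2 = p * d%:R ->
  \sum_(S : pairs | S \subset upper d) weight p S *
     expR (q^-1 * (\sum_(e in upper d) c e * ((e \in S)%:R - p) - 16 * d%:R * q))
  <= expR (- (8 * d%:R)).
Proof.
move=> hc p0 p1 q4 hq.
have q0 : 0 < q by lra.
have qi : 0 < q^-1 by rewrite invr_gt0.
have qi4 : q^-1 <= 1/4 by rewrite -[1/4]invrK lef_pV2 ?posrE // ?invrK; lra.
have c2 e : (c e) ^+ 2 <= 4.
  rewrite -real_normK ?num_real //; have := hc e; have := normr_ge0 (c e); nra.
have shift (A : pairs) :
  expR (q^-1 * (\sum_(e in upper d) c e * ((e \in A)%:R - p) - 16 * d%:R * q)) =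
  expR (- (16 * d%:R)) * expR (q^-1 * \sum_(e in upper d) c e * ((e \in A)%:R - p)).
  by rewrite -expRD; congr expR; field; rewrite gt_eqF.
under eq_bigr => S _ do rewrite shift mulrCA.
rewrite -mulr_sumr (_ : - (8 * d%:R) = - (16 * d%:R) + 8 * d%:R :> R); last by ring.
rewrite expRD ler_wpM2l ?expR_ge0 // /weight.
apply: le_trans (centered_sum_mgf_le (upper d) (c := c) p0 p1 _) _.
  move=> e; rewrite normrM (gtr0_norm qi).
  by have := hc e; have := normr_ge0 (c e); nra.
rewrite ler_expR.
have sum_le : \sum_(e in upper d) (q^-1 * c e) ^+ 2 <= (d * d)%:R * (4 * q^-2).
  apply: le_trans (_ : \sum_(e in upper d) 4 * q^-2 <= _).
    apply: ler_sum => e _; rewrite exprMn exprVn mulrC ler_wpM2r ?c2 //.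
    by rewrite invr_ge0 exprn_ge0 // ltW.
  rewrite sumr_const -[X in X <= _]mulr_natl ler_wpM2r ?ler_nat ?card_upper_le //.
  by rewrite mulr_ge0 // invr_ge0 exprn_ge0 // ltW.
have pd : 0 < p * d%:R by rewrite -hq exprn_gt0.
have e8 : 2 * p * ((d * d)%:R * (4 * q^-2)) = 8 * d%:R.
  by rewrite hq natrM; field; rewrite -negb_or -mulf_eq0 mulrC gt_eqF.
by rewrite -e8 ler_wpM2l // mulr_ge0.
Qed.

Definition cut_bounded (p q : R) (S : pairs) : bool :=
  [forall st : signs * signs, `|cut_form p S st.1 st.2| <= 16 * d%:R * q].

(* Two-sided Chernoff weight of the sign pair st; it is >= 1 when the
   cut form of st exceeds 16 d q in absolute value. *)
Definition cut_chernoff (p q : R) (S : pairs) (st : signs * signs) : R :=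
  expR (q^-1 * (cut_form p S st.1 st.2 - 16 * d%:R * q)) +
  expR (q^-1 * (- cut_form p S st.1 st.2 - 16 * d%:R * q)).

(* Markov/union bound, pointwise in S: the indicator of the good event is
   at least 1 minus the total Chernoff weight. *)
Lemma cut_bounded_indicator (p q : R) (S : pairs) : 0 < q ->
  1 - \sum_(st : signs * signs) cut_chernoff p q S st <= (cut_bounded p q S)%:R.
Proof.
move=> q0.
have chernoff_ge0 st : 0 <= cut_chernoff p q S st by rewrite addr_ge0 ?expR_ge0.
case good: (cut_bounded p q S).
  by rewrite lerBlDr lerDl sumr_ge0.
move/negbT: good; rewrite negb_forall => /existsP [st]; rewrite -ltNge => hst.
rewrite (bigD1 st) //=.
have rest0 : 0 <= \sum_(i | i != st) cut_chernoff p q S i by exact: sumr_ge0.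
suff : 1 <= cut_chernoff p q S st by lra.
have qi : 0 < q^-1 by rewrite invr_gt0.
rewrite /cut_chernoff; move: hst.
set X := cut_form _ _ _ _; set L := 16 * d%:R * q => hst.
have exp_ge1 (y : R) : 0 <= y -> 1 <= expR y by move=> y0; have := expR_ge1Dx y; lra.
have [hX|hX] : L < X \/ L < - X.
  by case: (lerP 0 X) => h; [left; rewrite -(ger0_norm h)|right; rewrite -(ltr0_norm h)].
  have : 1 <= expR (q^-1 * (X - L)) by apply: exp_ge1; rewrite pmulr_rge0 // subr_ge0 ltW.
  by have := expR_ge0 (q^-1 * (- X - L)); lra.
have : 1 <= expR (q^-1 * (- X - L)) by apply: exp_ge1; rewrite pmulr_rge0 // subr_ge0 ltW.
by have := expR_ge0 (q^-1 * (X - L)); lra.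
Qed.

Lemma cut_bounded_prob (p q : R) :
  0 <= p -> p <= 1 -> 4 <= q -> q ^+ 2 = p * d%:R ->
  1 - 2 * (2 ^ d * 2 ^ d)%:R * expR (- (8 * d%:R))
  <= \sum_(S : pairs | S \subset upper d) weight p S * (cut_bounded p q S)%:R.
Proof.
move=> p0 p1 q4 hq.
have q0 : 0 < q by lra.
apply: le_trans (_ : \sum_(S : pairs | S \subset upper d)
   weight p S * (1 - \sum_(st : signs * signs) cut_chernoff p q S st) <= _); last first.
  by apply: ler_sum => S _; rewrite ler_wpM2l ?weight_ge0 ?cut_bounded_indicator.
under eq_bigr => S _ do rewrite mulrBr mulr1 mulr_sumr.
rewrite sumrB weight_sum1 exchange_big /= lerD2l lerN2.
have -> : (2 * (2 ^ d * 2 ^ d)%:R * expR (- (8 * d%:R)) : R) =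
   \sum_(st : signs * signs) (expR (- (8 * d%:R)) + expR (- (8 * d%:R))).
  rewrite sumr_const card_prod card_ffun !card_bool card_ord -mulr_natl; ring.
apply: ler_sum => st _.
under eq_bigr => S _ do rewrite /cut_chernoff mulrDr.
rewrite big_split /=; apply: lerD.
  rewrite (eq_bigr (fun S => weight p S * expR (q^-1 * (\sum_(e in upper d)
      cut_coef st.1 st.2 e * ((e \in S)%:R - p) - 16 * d%:R * q)))); last first.
    by move=> S SU; rewrite cut_form_upper.
  by apply: cut_tail_le => //; exact: cut_coef_bound.
rewrite (eq_bigr (fun S => weight p S * expR (q^-1 * (\sum_(e in upper d)
    (- cut_coef st.1 st.2 e) * ((e \in S)%:R - p) - 16 * d%:R * q)))); last first.
  move=> S SU; rewrite cut_form_upper // -sumrN.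
  by under [in RHS]eq_bigr => e _ do rewrite mulNr.
by apply: cut_tail_le => // e; rewrite normrN; exact: cut_coef_bound.
Qed.

End CutForm.

Section BilinearDeviation.
Variables (R : realType) (d : nat).
Local Notation signs := {ffun 'I_d -> bool}.

Lemma sgn_mul_abs (b : bool) (x : R) : (0 <= x) = b -> sgn R b * x = `|x|.
Proof.
move=> <-; rewrite /sgn; case: lerP => h; first by rewrite mul1r ger0_norm.
by rewrite ltr0_norm // mulN1r.
Qed.

(* A bound L on all cut forms bounds every bilinear deviation of the mask:
   choosing the signs of the row sums, then of the column sums, reduces a
   general bilinear form with entries bounded by m1, m2 to a cut form. *)
Lemma bilinear_deviation_le (p L m1 m2 : R) (S : {set 'I_d * 'I_d}) (u w : 'I_d -> R) :
  (forall s t : signs, `|cut_form p S s t| <= L) -> 0 <= m1 -> 0 <= m2 ->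
  (forall i, `|u i| <= m1) -> (forall j, `|w j| <= m2) ->
  \sum_i \sum_j (omega_ind R S i j - p) * (u i * w j) <= L * m1 * m2.
Proof.
move=> hX m10 m20 hu hw.
pose r i := \sum_j (omega_ind R S i j - p) * w j.
have -> : \sum_i \sum_j (omega_ind R S i j - p) * (u i * w j) = \sum_i u i * r i.
  apply: eq_bigr => i _; rewrite /r mulr_sumr; apply: eq_bigr => j _; ring.
pose s : signs := [ffun i => 0 <= r i].
have rows_le : \sum_i u i * r i <= m1 * \sum_i sgn R (s i) * r i.
  rewrite mulr_sumr; apply: ler_sum => i _; rewrite (@sgn_mul_abs (s i)) ?ffunE //.
  by apply: le_trans (ler_norm _) _; rewrite normrM ler_wpM2r.
pose k j := \sum_i (omega_ind R S i j - p) * sgn R (s i).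
have swap : \sum_i sgn R (s i) * r i = \sum_j w j * k j.
  rewrite /r /k; under eq_bigr => i _ do rewrite mulr_sumr.
  rewrite exchange_big /=; apply: eq_bigr => j _; rewrite mulr_sumr.
  by apply: eq_bigr => i _; ring.
pose t : signs := [ffun j => 0 <= k j].
have cols_le : \sum_j w j * k j <= m2 * cut_form p S s t.
  have -> : cut_form p S s t = \sum_j sgn R (t j) * k j.
    rewrite /cut_form /k; under [RHS]eq_bigr => j _ do rewrite mulr_sumr.
    rewrite [RHS]exchange_big /=; apply: eq_bigr => i _; apply: eq_bigr => j _; ring.
  rewrite mulr_sumr; apply: ler_sum => j _; rewrite (@sgn_mul_abs (t j)) ?ffunE //.
  by apply: le_trans (ler_norm _) _; rewrite normrM ler_wpM2r.
have cut_le : cut_form p S s t <= L by apply: le_trans (ler_norm _) (hX s t).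
rewrite swap in rows_le; have := ler_wpM2l m10 cols_le; have := ler_wpM2l m20 cut_le.
have := mulr_ge0 m10 m20; nra.
Qed.

Lemma bilinear_deviation_bound (p L m1 m2 : R) (S : {set 'I_d * 'I_d}) (u w : 'I_d -> R) :
  (forall s t : signs, `|cut_form p S s t| <= L) -> 0 <= m1 -> 0 <= m2 ->
  (forall i, `|u i| <= m1) -> (forall j, `|w j| <= m2) ->
  `|\sum_i \sum_j (omega_ind R S i j - p) * (u i * w j)| <= L * m1 * m2.
Proof.
move=> hX m10 m20 hu hw; rewrite ler_norml; apply/andP; split; last first.
  exact: bilinear_deviation_le.
rewrite lerNl -sumrN.
have := @bilinear_deviation_le p L m1 m2 S (fun i => - u i) w hX m10 m20 _ hw.
rewrite (_ : \sum_i _ = \sum_i - \sum_j (omega_ind R S i j - p) * (u i * w j)).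
  by apply => i; rewrite normrN.
by apply: eq_bigr => i _; rewrite -sumrN; apply: eq_bigr => j _; ring.
Qed.

End BilinearDeviation.

Section QuarticMinimum.
Variable R : realType.

Lemma ge0_of_small_lower_bounds (x B t0 : R) : 0 < t0 -> 0 <= B ->
  (forall t, 0 < t -> t <= t0 -> - (t * B) <= x) -> 0 <= x.
Proof.
move=> t00 B0 h; rewrite leNgt; apply/negP => x0.
have [hB|hB] := ltrP (t0 * B) (- x); first by have := h t0 t00 (lexx _); lra.
have Bp : 0 < B by rewrite lt_def B0 andbT; apply: contraTneq hB => ->; lra.
have t1_pos : 0 < (- x) / (2 * B) by rewrite divr_gt0 //; lra.
have t1_le : (- x) / (2 * B) <= t0.
  by rewrite ler_pdivrMr; [have := mulr_ge0 (ltW t00) B0; lra | lra].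
have := h _ t1_pos t1_le.
by rewrite (_ : (- x) / (2 * B) * B = - x / 2); [lra | field; rewrite gt_eqF].
Qed.

Lemma pow_term_bound (t a : R) n : 0 < t -> t <= 1 ->
  - (t * `|a|) <= t ^+ n.+1 * a <= t * `|a|.
Proof.
move=> tp t1.
have pow_le : t ^+ n.+1 <= t.
  by rewrite exprSr; have := exprn_ile1 n (ltW tp) t1; nra.
have pow_ge0 : 0 <= t ^+ n.+1 by rewrite exprn_ge0 // ltW.
have up : t ^+ n.+1 * a <= t ^+ n.+1 * `|a| by rewrite ler_wpM2l // ler_norm.
have lo : t ^+ n.+1 * (- a) <= t ^+ n.+1 * `|a| by rewrite ler_wpM2l // -normrN ler_norm.
have mono : t ^+ n.+1 * `|a| <= t * `|a| by rewrite ler_wpM2r.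
by rewrite mulrN in lo; apply/andP; split; lra.
Qed.

Lemma quartic_local_min (a1 a2 a3 a4 r0 : R) : 0 < r0 ->
  (forall t, `|t| < r0 -> 0 <= t * a1 + t ^+ 2 * a2 + t ^+ 3 * a3 + t ^+ 4 * a4) ->
  a1 = 0 /\ 0 <= a2.
Proof.
move=> r00 h.
pose t0 := Num.min (r0 / 2) 1.
have t00 : 0 < t0 by rewrite lt_min ltr01 andbT divr_gt0.
have t0r : t0 < r0 by rewrite gt_min; apply/orP; left; lra.
have t01 : t0 <= 1 by rewrite ge_min lexx orbT.
have both_signs (t : R) : 0 < t -> t <= t0 -> t <= 1 /\
    0 <= a1 + t * a2 + t ^+ 2 * a3 + t ^+ 3 * a4 /\
    0 <= - a1 + t * a2 - t ^+ 2 * a3 + t ^+ 3 * a4.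
  move=> tp tt0; split; first lra.
  have := h t; have := h (- t); rewrite normrN gtr0_norm // => hm hp.
  have {hm hp}[hm hp] := (hm ltac:(lra), hp ltac:(lra)).
  rewrite !exprS !expr0 !mulr1 in hm hp; split.
    by rewrite -(pmulr_rge0 _ tp); lra.
  by rewrite -(pmulr_rge0 _ tp); lra.
have B0 : 0 <= `|a2| + `|a3| + `|a4| by rewrite !addr_ge0.
have n2 := normr_ge0 a2; have n3 := normr_ge0 a3; have n4 := normr_ge0 a4.
have a1_ge0 : 0 <= a1.
  apply: (ge0_of_small_lower_bounds t00 B0) => t tp tt0.
  have [t1 [hb _]] := both_signs t tp tt0.
  have /andP[_ b2] := pow_term_bound a2 0 tp t1.
  have /andP[_ b3] := pow_term_bound a3 1 tp t1.
  have /andP[_ b4] := pow_term_bound a4 2 tp t1.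
  rewrite expr1 in b2; lra.
have a1_le0 : 0 <= - a1.
  apply: (ge0_of_small_lower_bounds t00 B0) => t tp tt0.
  have [t1 [_ hb]] := both_signs t tp tt0.
  have /andP[_ b2] := pow_term_bound a2 0 tp t1.
  have /andP[b3 _] := pow_term_bound a3 1 tp t1.
  have /andP[_ b4] := pow_term_bound a4 2 tp t1.
  rewrite expr1 in b2; lra.
split; first lra.
apply: (ge0_of_small_lower_bounds t00 n4) => t tp tt0.
have [t1 [ha hb]] := both_signs t tp tt0.
have /andP[_ b4] := pow_term_bound a4 1 tp t1.
have : 0 <= t * (a2 + t ^+ 2 * a4) by have := addr_ge0 ha hb; lra.
rewrite pmulr_rge0 //; lra.
Qed.

End QuarticMinimum.

Section Objective.
Variables (R : realType) (d : nat).
Implicit Types (S : {set 'I_d * 'I_d}) (z x v : 'I_d -> R).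

Definition masked_obj S z x : R :=
  2^-1 * \sum_i \sum_j omega_ind R S i j * (z i * z j - x i * x j) ^+ 2.

Lemma fobj_masked_obj S (z x : 'cV[R]_d) :
  fobj (omega_of S) (z *m z^T) x = masked_obj S (fun i => z i 0) (fun i => x i 0).
Proof.
rewrite /fobj /normF /masked_obj sqr_sqrtr; last first.
  by apply: sumr_ge0 => i _; apply: sumr_ge0 => j _; exact: sqr_ge0.
congr (_ * _); apply: eq_bigr => i _; apply: eq_bigr => j _.
rewrite !mxE /omega_ind !big_ord1 !mxE.
by case: ((i, j) \in omega_of S); rewrite ?mul1r ?mul0r ?expr0n.
Qed.

(* Coefficients of the quartic t |-> masked_obj S z (x + t v). *)
Definition lin_coef S z x v : R := \sum_i \sum_j omega_ind R S i j *
  (- ((z i * z j - x i * x j) * (x i * v j + v i * x j))).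
Definition quad_coef S z x v : R := \sum_i \sum_j omega_ind R S i j *
  (2^-1 * ((x i * v j + v i * x j) ^+ 2 - 2 * (z i * z j - x i * x j) * (v i * v j))).
Definition cubic_coef S z x v : R := \sum_i \sum_j omega_ind R S i j *
  ((x i * v j + v i * x j) * (v i * v j)).
Definition quartic_coef S z x v : R := \sum_i \sum_j omega_ind R S i j *
  (2^-1 * (v i * v j) ^+ 2).

Lemma masked_obj_expand S z x v t :
  masked_obj S z (fun i => x i + t * v i) =
  masked_obj S z x + t * lin_coef S z x v + t ^+ 2 * quad_coef S z x v
  + t ^+ 3 * cubic_coef S z x v + t ^+ 4 * quartic_coef S z x v.
Proof.
rewrite /masked_obj /lin_coef /quad_coef /cubic_coef /quartic_coef.
rewrite !mulr_sumr -!big_split /=; apply: eq_bigr => i _.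
by rewrite !mulr_sumr -!big_split /=; apply: eq_bigr => j _; field.
Qed.

Lemma norm2Z (t : R) (v : 'cV[R]_d) : norm2 (t *: v) = `|t| * norm2 v.
Proof.
rewrite /norm2 -sqrtr_sqr -sqrtrM ?sqr_ge0 //; congr Num.sqrt.
by rewrite mulr_sumr; apply: eq_bigr => i _; rewrite !mxE; ring.
Qed.

Lemma local_min_conditions S (z x v : 'cV[R]_d) :
  local_min (fobj (omega_of S) (z *m z^T)) x ->
  lin_coef S (fun i => z i 0) (fun i => x i 0) (fun i => v i 0) = 0 /\
  0 <= quad_coef S (fun i => z i 0) (fun i => x i 0) (fun i => v i 0).
Proof.
case=> r [r0 hr].
have n0 : 0 <= norm2 v by exact: sqrtr_ge0.
apply: (quartic_local_min (a3 := cubic_coef S _ _ _) (a4 := quartic_coef S _ _ _)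
  (r0 := r / (norm2 v + 1))); first by rewrite divr_gt0 //; lra.
move=> t ht.
have step_lt : `|t| * norm2 v < r.
  by move: ht; rewrite ltr_pdivlMr; [have := normr_ge0 t; nra | lra].
have := hr (x + t *: v); rewrite (addrC x) addrK norm2Z => /(_ step_lt).
rewrite !fobj_masked_obj.
rewrite (_ : (fun i => (t *: v + x) i 0) = (fun i => x i 0 + t * v i 0)); last first.
  by apply: funext => i; rewrite !mxE addrC.
by rewrite masked_obj_expand; lra.
Qed.

End Objective.

Section MomentAlgebra.
Variable R : realType.

(* The scalar core of the recovery: with a = |x|^2 and b = <x,z>, the
   approximate stationarity and curvature conditions force a + 1 - 2b to be
   small (first for b >= 0, then up to the sign of b). *)
Lemma moment_gap_le (a b e : R) : 0 <= a -> 0 <= b -> 0 <= e -> e <= 1/100 ->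
  `|a ^+ 2 - b ^+ 2| <= 2 * e -> b * `|1 - a| <= 2 * e ->
  1 - 4 * e <= a + 2 * b ^+ 2 ->
  a + 1 - 2 * b <= 40 * e.
Proof.
move=> a0 b0 e0 e1 /[!ler_norml] /andP [sq_lo sq_hi] stat curv.
have b_ge : 1/3 <= b.
  rewrite leNgt; apply/negP => hb.
  have : b ^+ 2 <= 1/9 by rewrite expr2; nra.
  have : 1/4 <= a ^+ 2 by rewrite expr2; nra.
  lra.
have : `|1 - a| <= 6 * e.
  have : (1/3) * `|1 - a| <= b * `|1 - a| by rewrite ler_wpM2r.
  lra.
rewrite ler_norml => /andP [a_lo a_hi].
have b2_ge : 1 - 14 * e <= b ^+ 2.
  have : (1 - 6 * e) ^+ 2 <= a ^+ 2 by rewrite !expr2; apply: ler_pM; lra.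
  nra.
have : 1 - 14 * e <= b.
  have [b_ge1|b_lt1] := lerP 1 b; first lra.
  have : b ^+ 2 <= b by rewrite expr2; nra.
  lra.
lra.
Qed.

Lemma moment_gap_abs_le (a b e : R) : 0 <= a -> 0 <= e -> e <= 1/100 ->
  `|a ^+ 2 - b ^+ 2| <= 2 * e -> `|b - a * b| <= 2 * e ->
  1 - 4 * e <= a + 2 * b ^+ 2 ->
  a + 1 - 2 * `|b| <= 40 * e.
Proof.
move=> a0 e0 e1 sq stat curv.
apply: moment_gap_le; rewrite ?real_normK ?num_real //.
by move: stat; rewrite -{1}(mul1r b) -mulrBl normrM mulrC.
Qed.

End MomentAlgebra.

Section Recovery.
Variables (R : realType) (d : nat).
Local Notation signs := {ffun 'I_d -> bool}.
Implicit Types (S : {set 'I_d * 'I_d}) (u w z x : 'I_d -> R).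

Definition masked_form S u w : R := \sum_i \sum_j omega_ind R S i j * (u i * w j).

Definition hadamard u w : 'I_d -> R := fun i => u i * w i.

Lemma masked_form_approx S (p L m : R) u w :
  (forall s t : signs, `|cut_form p S s t| <= L) -> 0 <= m ->
  (forall i, `|u i| <= m) -> (forall j, `|w j| <= m) ->
  `|masked_form S u w - p * (\sum_i u i) * (\sum_j w j)| <= L * m * m.
Proof.
move=> hX m0 hu hw.
have -> : masked_form S u w - p * (\sum_i u i) * (\sum_j w j) =
    \sum_i \sum_j (omega_ind R S i j - p) * (u i * w j).
  rewrite -mulrA mulr_suml mulr_sumr /masked_form -sumrB; apply: eq_bigr => i _.
  by rewrite mulr_sumr mulr_sumr -sumrB; apply: eq_bigr => j _; ring.
exact: bilinear_deviation_bound.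
Qed.

Lemma lin_coef_self S z x : lin_coef S z x x =
  2 * masked_form S (hadamard x x) (hadamard x x)
  - 2 * masked_form S (hadamard x z) (hadamard x z).
Proof.
rewrite /lin_coef /masked_form /hadamard !mulr_sumr -sumrB; apply: eq_bigr => i _.
by rewrite !mulr_sumr -sumrB; apply: eq_bigr => j _; ring.
Qed.

Lemma lin_coef_target S z x : lin_coef S z x z =
  masked_form S (hadamard x x) (hadamard x z) + masked_form S (hadamard x z) (hadamard x x)
  - masked_form S (hadamard x z) (hadamard z z) - masked_form S (hadamard z z) (hadamard x z).
Proof.
rewrite /lin_coef /masked_form /hadamard -big_split /= -!sumrB; apply: eq_bigr => i _.
by rewrite -big_split /= -!sumrB; apply: eq_bigr => j _; ring.
Qed.

Lemma quad_coef_target S z x : quad_coef S z x z =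
  2^-1 * (masked_form S (hadamard x x) (hadamard z z)
  + masked_form S (hadamard z z) (hadamard x x)
  + 4 * masked_form S (hadamard x z) (hadamard x z)
  - 2 * masked_form S (hadamard z z) (hadamard z z)).
Proof.
rewrite /quad_coef /masked_form /hadamard (mulr_sumr _ _ _ 4) (mulr_sumr _ _ _ 2).
rewrite -!big_split /= -sumrB mulr_sumr; apply: eq_bigr => i _.
rewrite !mulr_sumr -!big_split /= -sumrB mulr_sumr; apply: eq_bigr => j _.
by field.
Qed.

(* At a local minimum on the good event, a = |x|^2 and b = <x,z> satisfy
   the approximate identities a^2 = b^2 and b = a b (stationarity along x
   and z) and a + 2 b^2 >= 1 (curvature along z), with error 2e, 4e. *)
Lemma moment_conditions S (p L c e a b : R) z x :
  (forall s t : signs, `|cut_form p S s t| <= L) -> 0 < p ->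
  L * c ^+ 2 * c ^+ 2 <= p * e ->
  (forall i, `|x i| <= c) -> (forall i, `|z i| <= c) -> \sum_i z i * z i = 1 ->
  a = \sum_i x i * x i -> b = \sum_i x i * z i ->
  lin_coef S z x x = 0 -> lin_coef S z x z = 0 -> 0 <= quad_coef S z x z ->
  [/\ `|a ^+ 2 - b ^+ 2| <= 2 * e, `|b - a * b| <= 2 * e
    & 1 - 4 * e <= a + 2 * b ^+ 2].
Proof.
move=> hX p0 hE hx hz zz1 ha hb stat_x stat_z curv_z.
have m0 : 0 <= c ^+ 2 by exact: sqr_ge0.
have entry u w : (forall i, `|u i| <= c) -> (forall i, `|w i| <= c) ->
    forall i, `|hadamard u w i| <= c ^+ 2.
  by move=> hu hw i; rewrite normrM expr2 ler_pM ?normr_ge0.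
have approx u w : (forall i, `|u i| <= c) -> (forall i, `|w i| <= c) ->
    forall u' w', (forall i, `|u' i| <= c) -> (forall i, `|w' i| <= c) ->
    `|masked_form S (hadamard u w) (hadamard u' w')
      - p * (\sum_i hadamard u w i) * (\sum_i hadamard u' w' i)| <= p * e.
  move=> hu hw u' w' hu' hw'; apply: le_trans hE.
  exact: masked_form_approx (entry _ _ hu hw) (entry _ _ hu' hw').
have sxx : \sum_i hadamard x x i = a by rewrite ha.
have sxz : \sum_i hadamard x z i = b by rewrite hb.
have szz : \sum_i hadamard z z i = 1 by rewrite -zz1.
move: (approx _ _ hx hx _ _ hx hx) (approx _ _ hx hz _ _ hx hz).
move: (approx _ _ hx hx _ _ hx hz) (approx _ _ hx hz _ _ hx hx).
move: (approx _ _ hx hz _ _ hz hz) (approx _ _ hz hz _ _ hx hz).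
move: (approx _ _ hx hx _ _ hz hz) (approx _ _ hz hz _ _ hx hx).
move: (approx _ _ hz hz _ _ hz hz).
rewrite sxx sxz szz !mulr1 => /ler_normlP[q1 q2] /ler_normlP[q3 q4]
  /ler_normlP[q5 q6] /ler_normlP[q7 q8] /ler_normlP[q9 q10] /ler_normlP[q11 q12]
  /ler_normlP[q13 q14] /ler_normlP[q15 q16] /ler_normlP[q17 q18].
rewrite lin_coef_self in stat_x; rewrite lin_coef_target in stat_z.
rewrite quad_coef_target pmulr_rge0 ?invr_gt0 // in curv_z.
split; last by rewrite -(ler_pM2l p0) expr2; lra.
  by rewrite ler_norml; apply/andP; split; rewrite -(ler_pM2l p0) !expr2; lra.
by rewrite ler_norml; apply/andP; split; rewrite -(ler_pM2l p0); lra.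
Qed.

End Recovery.

Section Norms.
Variables (R : realType) (d : nat).

Lemma normInf_ge (x : 'cV[R]_d) i : `|x i 0| <= normInf x.
Proof. exact: (Order.TotalTheory.le_bigmax 0 (fun i => `|x i 0|) i). Qed.

Lemma norm2_sq (v : 'cV[R]_d) : norm2 v ^+ 2 = \sum_i v i 0 * v i 0.
Proof.
rewrite /norm2 sqr_sqrtr; last by apply: sumr_ge0 => i _; exact: sqr_ge0.
by apply: eq_bigr => i _; rewrite expr2.
Qed.

(* Distance to {z, -z} in terms of a = |x|^2 and b = <x,z>, for |z| = 1:
   |x -+ z|^2 = a -+ 2 b + 1. *)
Lemma dist_of_moments (x z : 'cV[R]_d) (eps : R) : norm2 z = 1 -> 0 <= eps ->
  \sum_i x i 0 * x i 0 + 1 - 2 * `|\sum_i x i 0 * z i 0| <= eps ->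
  Num.min (norm2 (x - z)) (norm2 (x + z)) <= Num.sqrt eps.
Proof.
move=> z1 eps0; set a := \sum_i _; set b := \sum_i _ => gap.
have zz : \sum_i z i 0 * z i 0 = 1 by rewrite -norm2_sq z1 expr1n.
have expand (s : R) :
    norm2 (x + s *: z) ^+ 2 = a + 2 * s * b + s ^+ 2 * \sum_i z i 0 * z i 0.
  rewrite norm2_sq /a /b !mulr_sumr -!big_split /=.
  by apply: eq_bigr => i _; rewrite !mxE; ring.
have le_sqrt (v : 'cV[R]_d) : norm2 v ^+ 2 <= eps -> norm2 v <= Num.sqrt eps.
  by move=> h; rewrite -(ger0_norm (sqrtr_ge0 _ : 0 <= norm2 v)) -sqrtr_sqr ler_sqrt.
rewrite ge_min; apply/orP; have [b0|b0] := lerP 0 b.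
  left; apply: le_sqrt; rewrite -scaleN1r expand zz sqrrN expr1n mulr1.
  by move: gap; rewrite ger0_norm //; lra.
right; apply: le_sqrt; rewrite -[X in norm2 (x + X)]scale1r expand zz expr1n mulr1.
by move: gap; rewrite ltr0_norm //; lra.
Qed.

End Norms.

Section GoodEventRecovery.
Variables (R : realType) (d : nat).

Lemma cut_error_small (p q mu eps : R) : (0 < d)%N -> 0 < q -> q ^+ 2 = p * d%:R ->
  10240 * mu ^+ 4 <= q * eps ->
  16 * d%:R * q * (2 * mu / Num.sqrt d%:R) ^+ 2 * (2 * mu / Num.sqrt d%:R) ^+ 2
  <= p * (eps / 40).
Proof.
move=> d0 q0 hq hmu.
have dpos : 0 < (d%:R : R) by rewrite ltr0n.
have sd : 0 < Num.sqrt (d%:R : R) by rewrite sqrtr_gt0.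
have sd2 : Num.sqrt (d%:R : R) ^+ 2 = d%:R by rewrite sqr_sqrtr // ltW.
have -> : p = q ^+ 2 / d%:R by rewrite hq mulfK // gt_eqF.
rewrite -subr_ge0.
have -> : q ^+ 2 / d%:R * (eps / 40) - 16 * d%:R * q * (2 * mu / Num.sqrt d%:R) ^+ 2
    * (2 * mu / Num.sqrt d%:R) ^+ 2 = q / (40 * d%:R) * (q * eps - 10240 * mu ^+ 4).
  by move: sd sd2; set s := Num.sqrt _ => sd sd2; rewrite -sd2; field; rewrite gt_eqF.
by rewrite mulr_ge0 ?subr_ge0 // divr_ge0 ?ltW // mulr_gt0.
Qed.

Lemma recovery_on_cut_bounded S (p q mu eps : R) (z x : 'cV[R]_d) :
  (0 < d)%N -> 0 < q -> q ^+ 2 = p * d%:R -> 10240 * mu ^+ 4 <= q * eps ->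
  0 < eps -> eps <= 1/4 -> cut_bounded p q S ->
  norm2 z = 1 -> normInf z <= mu / Num.sqrt d%:R ->
  local_min (fobj (omega_of S) (z *m z^T)) x -> normInf x < 2 * mu / Num.sqrt d%:R ->
  Num.min (norm2 (x - z)) (norm2 (x + z)) <= Num.sqrt eps.
Proof.
move=> d0 q0 hq hmu e0 e1 good hz hzi hlm hxi.
have p0 : 0 < p by rewrite -(@pmulr_lgt0 _ d%:R) ?ltr0n // -hq exprn_gt0.
have hxb i : `|x i 0| <= 2 * mu / Num.sqrt d%:R.
  exact: ltW (le_lt_trans (normInf_ge x i) hxi).
have hzb i : `|z i 0| <= 2 * mu / Num.sqrt d%:R.
  have zi := le_trans (normInf_ge z i) hzi.
  by have := le_trans (normr_ge0 _) zi; rewrite -mulrA; lra.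
have hX s t : `|cut_form p S s t| <= 16 * d%:R * q by exact: (forallP good (s, t)).
have zz1 : \sum_i z i 0 * z i 0 = 1 by rewrite -norm2_sq hz expr1n.
have [stat_x _] := local_min_conditions x hlm.
have [stat_z curv_z] := local_min_conditions z hlm.
have [sq stat curv] := moment_conditions hX p0 (cut_error_small d0 q0 hq hmu)
  hxb hzb zz1 erefl erefl stat_x stat_z curv_z.
have a0 : 0 <= \sum_i x i 0 * x i 0 by apply: sumr_ge0 => i _; rewrite -expr2 sqr_ge0.
have e40 : 0 <= eps / 40 by rewrite divr_ge0 // ltW.
apply: dist_of_moments hz (ltW e0) _.
by have := moment_gap_abs_le a0 e40 ltac:(lra) sq stat curv; lra.
Qed.

End GoodEventRecovery.

Section Probability.
Variable R : realType.

Lemma four_expR_neg8_le : 4 * expR (- 8 : R) <= 1/2.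
Proof.
have e8 : 9 <= expR (8 : R) by have := expR_ge1Dx (8 : R); lra.
have : (expR (8 : R))^-1 <= 9^-1 by rewrite lef_pV2 ?posrE ?expR_gt0 //; lra.
rewrite expRN; lra.
Qed.

(* The union bound 2 * 4^d * e^(-8d) <= 2 (4 e^(-8))^d <= 2^(1-d) is below
   eta once d > 2/eta. *)
Lemma failure_prob_small (d : nat) (eta : R) : 0 < eta ->
  ((Num.Def.trunc (2 / eta)).+1 <= d)%N ->
  2 * (2 ^ d * 2 ^ d)%:R * expR (- (8 * d%:R)) <= eta.
Proof.
move=> eta0 hd.
have -> : expR (- (8 * d%:R)) = expR (- 8 : R) ^+ d.
  by rewrite -expRM_natl; congr expR; ring.
have -> : ((2 ^ d * 2 ^ d)%:R : R) = 4 ^+ d by rewrite -expnMn natrX.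
rewrite -mulrA -exprMn.
have pow_le : (4 * expR (- 8 : R)) ^+ d <= (2 ^ d)%:R^-1.
  rewrite natrX -exprVn lerXn2r ?nnegrE ?mulr_ge0 ?expR_ge0 ?invr_ge0 //.
  by have := four_expR_neg8_le; lra.
have d_gt : 2 / eta < d%:R.
  by apply: lt_le_trans (truncnS_gt _) _; rewrite ler_nat.
have d_le : (d%:R : R) <= (2 ^ d)%:R by rewrite ler_nat ltnW // ltn_expl.
have two_pos : (0 : R) < (2 ^ d)%:R by rewrite ltr0n expn_gt0.
apply: le_trans (_ : 2 * (2 ^ d)%:R^-1 <= _); first by rewrite ler_wpM2l.
rewrite ler_pdivrMr //; move: d_gt; rewrite ltr_pdivrMr // => d_gt.
have : d%:R * eta <= (2 ^ d)%:R * eta by rewrite ler_wpM2r // ltW.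
lra.
Qed.

Lemma prob_ge_cut_bounded (d : nat) (p q : R) (E : {set 'I_d * 'I_d} -> Prop) :
  0 <= p -> p <= 1 ->
  (forall S : {set 'I_d * 'I_d}, S \subset upper d -> cut_bounded p q S -> E S) ->
  \sum_(S : {set 'I_d * 'I_d} | S \subset upper d) weight p S * (cut_bounded p q S)%:R
  <= prob p E.
Proof.
move=> p0 p1 hE; apply: ler_sum => S SU.
rewrite ler_wpM2l ?weight_ge0 //.
case good: (cut_bounded p q S); last by case: asboolP.
by rewrite asboolT //; apply: hE.
Qed.

Lemma sample_size_bound (d : nat) (p mu eps : R) : 0 <= p -> 0 < eps -> eps <= 1 ->
  10240 ^+ 2 * mu ^+ 8 + 16 <= p * (d%:R * eps ^+ 2) ->
  4 <= Num.sqrt (p * d%:R) /\ 10240 * mu ^+ 4 <= Num.sqrt (p * d%:R) * eps.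
Proof.
move=> p0 e0 e1 hP.
have pd0 : 0 <= p * d%:R by rewrite mulr_ge0.
have mu8 : 0 <= 10240 ^+ 2 * mu ^+ 8 by rewrite mulr_ge0 ?exprn_even_ge0.
have e21 : eps ^+ 2 <= 1 by rewrite expr_le1 // ltW.
have sq_le : p * d%:R * eps ^+ 2 <= p * d%:R by rewrite ler_piMr.
have mu8e : mu ^+ 8 = (mu ^+ 4) ^+ 2 by rewrite -exprM.
rewrite mulrA mu8e in hP; split.
  rewrite -(@ler_pXn2r _ 2) ?nnegrE ?sqrtr_ge0 // sqr_sqrtr //; lra.
have lhs0 : 0 <= 10240 * mu ^+ 4 by rewrite mulr_ge0 ?ler0n ?exprn_even_ge0.
have rhs0 : 0 <= Num.sqrt (p * d%:R) * eps by rewrite mulr_ge0 ?sqrtr_ge0 ?ltW.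
rewrite -(ler_pXn2r (n := 2) isT lhs0 rhs0) !exprMn sqr_sqrtr //; lra.
Qed.

End Probability.

Theorem theorem4p2 (R : realType) :
  exists (P : {poly {poly R}}) (c0 C : R), 0 < c0 /\ 0 < C /\
  forall eta : R, 0 < eta -> exists D : nat, forall d : nat, (D <= d)%N ->
  forall (mu : R) (z : 'cV[R]_d) (eps p : R),
    norm2 z = 1 -> normInf z <= mu / Num.sqrt d%:R ->
    0 < eps -> eps <= c0 -> 0 <= p -> p <= 1 ->
    peval2 P mu (ln d%:R) / (d%:R * eps ^+ 2) <= p ->
    1 - eta <= prob p (fun S =>
      forall x : 'cV[R]_d,
        local_min (fobj (omega_of S) (z *m z^T)) x ->
        normInf x < 2 * mu / Num.sqrt d%:R ->
        Num.min (norm2 (x - z)) (norm2 (x + z)) <= C * Num.sqrt eps).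
Proof.
exists ((10240 ^+ 2 *: 'X^8 + 16%:P)%:P), (1/4), 1; do 2 split => //.
move=> eta eta0; exists (Num.Def.trunc (2 / eta)).+1.
move=> d hd mu z eps p hz hzi e0 e1 p0 p1 hP.
have d0 : (0 < d)%N by apply: leq_trans hd.
have de0 : 0 < d%:R * eps ^+ 2 :> R by rewrite mulr_gt0 ?ltr0n ?exprn_gt0.
have peval_P : peval2 ((10240 ^+ 2 *: 'X^8 + 16%:P)%:P) mu (ln d%:R) =
    10240 ^+ 2 * mu ^+ 8 + 16 by rewrite /peval2 hornerC !hornerE.
rewrite peval_P ler_pdivrMr // in hP.
have [q4 hmu] := sample_size_bound p0 e0 ltac:(lra) hP.
have q0 : 0 < Num.sqrt (p * d%:R) by lra.
have hq : Num.sqrt (p * d%:R) ^+ 2 = p * d%:R by rewrite sqr_sqrtr ?mulr_ge0.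
apply: le_trans (prob_ge_cut_bounded (q := Num.sqrt (p * d%:R)) p0 p1 _); last first.
  move=> S _ good x hlm hxi; rewrite mul1r.
  exact: recovery_on_cut_bounded d0 q0 hq hmu e0 e1 good hz hzi hlm hxi.
apply: le_trans (cut_bounded_prob p0 p1 q4 hq).
by have := failure_prob_small eta0 hd; lra.
Qed.
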